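(* Let $E$ be an integral regular elliptic curve over $\mathbb{F}_q$, let $\mathbf{n}_{m-1}$ be a tuple of positive integers, $Q=q_{\mathbf{n}_{m-1}}$, and let $a$ and $\beta^*_n$ ($n\ge0$) be as in the context (assuming $\alpha_0\neq0$), with additionally $\beta^*_{-1}:=0$. Then for every $n\ge1$, $$(Q^n-1)\,\beta^*_n=(Q^n+Q^{n-1}-a)\,\beta^*_{n-1}-(Q^{n-1}-Q)\,\beta^*_{n-2},$$ and together with $\beta^*_0=1$, $\beta^*_{-1}=0$ this recursion determines all $\beta^*_n$.
   Context: Let $\zeta_E(s)=\sum_{D\ge 0}N(D)^{-s}$ be the Artin zeta function of $E$ and $\widehat\zeta_E(s)=\zeta_E(s)$ its complete Artin zeta function (genus $1$). Derived zeta functions are defined recursively (here $g=1$). For the empty tuple $\mathbf{n}_{-1}=()$ put $q_{\mathbf{n}_{-1}}=q$, $T_{\mathbf{n}_{-1}}=q^{-s}$, $\widehat\zeta^{(\mathbf{n}_{-1})}_E=\widehat\zeta_E$. For a tuple $\mathbf{n}_m=(n_0,\dots,n_m)$ of positive integers put $\mathbf{n}_{m-1}=(n_0,\dots,n_{m-1})$, $q_{\mathbf{n}_m}=q^{n_0\cdots n_m}$, $T_{\mathbf{n}_m}=q^{-n_0\cdots n_ms}$; with $\widehat Z^{(\mathbf{n}_{m-1})}_E(T_{\mathbf{n}_{m-1}}):=\widehat\zeta^{(\mathbf{n}_{m-1})}_E(s)$, $\widehat\zeta^{(\mathbf{n}_{m-1})}_E(1):=\operatorname{Res}_{T_{\mathbf{n}_{m-1}}=1}\widehat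 Z^{(\mathbf{n}_{m-1})}_E$, $\widehat v_N=\prod_{k=1}^N\widehat\zeta^{(\mathbf{n}_{m-1})}_E(k)$, $$\widehat\zeta^{(\mathbf{n}_m)}_E(s)=\sum_{a=1}^{n_m}\Biggl(\sum_{\substack{k_1,\dots,k_p>0\\ \sum k_i=n_m-a}}\frac{\widehat v_{k_1}\cdots\widehat v_{k_p}}{\prod_{j=1}^{p-1}(1-q_{\mathbf{n}_{m-1}}^{k_j+k_{j+1}})}\frac{1}{1-q_{\mathbf{n}_{m-1}}^{n_ms-n_m+a+k_p}}\Biggr)\widehat\zeta^{(\mathbf{n}_{m-1})}_E(n_ms-n_m+a)\Biggl(\sum_{\substack{l_1,\dots,l_r>0\\ \sum l_i=a-1}}\frac{1}{1-q_{\mathbf{n}_{m-1}}^{-n_ms+n_m-a+1+l_1}}\frac{\widehat v_{l_1}\cdots\widehat v_{l_r}}{\prod_{j=1}^{r-1}(1-q_{\mathbf{n}_{m-1}}^{l_j+l_{j+1}})}\Biggr),$$ inner sums over ordered tuples of positive integers, an empty-composition sum being $1$. For the tuple $\mathbf{n}_{m-1}$, with $Q=q_{\mathbf{n}_{m-1}}$ and $T=Q^{-s}$, one can write $\widehat\zeta^{(\mathbf{n}_{m-1})}_E(s)=\alpha_0\cdot\frac{1-aT+QT^2}{(1-T)(1-QT)}$ with numbers $\alpha_0=\alpha^{(\mathbf{n}_{m-1})}_E(0)$ and $a$. Normalization: $\zeta^*(s):=\frac{1-aT+QT^2}{(1-T)(1-QT)}$, $\zeta^*(1):=\operatorname{Res}_{T=1}\zeta^*=\frac{Q+1-a}{Q-1}$,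 $v^*_k:=\prod_{j=1}^k\zeta^*(j)$, $\beta^*_0:=1$ and for $n\ge1$ $$\beta^*_n:=\sum_{\substack{k_1,\dots,k_p>0\\k_1+\cdots+k_p=n}}\frac{v^*_{k_1}\cdots v^*_{k_p}}{\prod_{j=1}^{p-1}(1-Q^{k_j+k_{j+1}})},$$ the $(\mathbf{n}_{m-1},n)$-derived beta invariant of $E$ computed from the normalized function $\zeta^*$. *)

From mathcomp Require Import all_boot all_order all_algebra.
Set Implicit Arguments. Unset Strict Implicit. Unset Printing Implicit Defensive.
Import Order.TTheory GRing.Theory Num.Theory.
Local Open Scope ring_scope.

(* Compositions of n: all ordered tuples of positive integers summing to n.
   [compositions_aux fuel n] enumerates them by the first part k in 1..n;
   fuel = n suffices.  compositions 0 = [:: [::]] (the empty composition). *)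
Fixpoint compositions_aux (fuel n : nat) : seq (seq nat) :=
  if n == 0%N then [:: [::]] else
  match fuel with
  | 0%N => [::]
  | fuel'.+1 =>
      flatten [seq [seq k :: c | c <- compositions_aux fuel' (n - k)]
              | k <- iota 1 n]
  end.
Definition compositions (n : nat) : seq (seq nat) := compositions_aux n n.

Section BetaStar.
Variable R : realFieldType.

(* zeta^*(s) = (1 - a T + Q T^2)/((1-T)(1-QT)), T = Q^{-s}, evaluated at the
   positive integer j >= 2; zeta^*(1) := (Q+1-a)/(Q-1) (residue normalization). *)
Definition zeta_star (Q a : R) (j : nat) : R :=
  if j == 1%N then (Q + 1 - a) / (Q - 1)
  else let T := (Q ^+ j)^-1 in (1 - a * T + Q * T ^+ 2) / ((1 - T) * (1 - Q * T)).

Definition v_star (Q a : R) (k : nat) : R := \prod_(1 <= j < k.+1) zeta_star Q a j.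

Definition beta_star (Q a : R) (n : nat) : R :=
  \sum_(c <- compositions n)
    (\prod_(k <- c) v_star Q a k) /
    \prod_(i < (size c).-1) (1 - Q ^+ (nth 0%N c i + nth 0%N c i.+1)).

Definition ext0 (f : nat -> R) (k : int) : R :=
  match k with Posz n => f n | Negz _ => 0 end.

End BetaStar.

From mathcomp Require Import all_boot all_order all_algebra.
From mathcomp Require Import ring zify.
Import Order.TTheory GRing.Theory Num.Theory.
Local Open Scope ring_scope.

(* Split beta_r = sum_j A_r(j) according to the first part j of the
   composition, so that A_r(j) = v_j gamma_{r-j}(j), where gamma_s(k) is the
   composition sum for s in which the first part c_1 also carries the link
   factor 1/(1 - Q^(k+c_1)) to a preceding part k.  For fixed r the A_r(j)
   satisfy two three-term relations in j (part_law1, part_law2), and gamma_s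
   satisfies a shift and a step functional equation in k.  These are proved
   by one induction on r: summing a relation for the A_r(j) against
   1/(1 - Q^(k+j)) telescopes to an equation for gamma_r, and the equations
   for smaller gamma give back the relations through the explicit form of
   zeta^*(j) = v_j / v_(j-1).
   With N_r = sum_j Q^-j A_r(j) and P_r = sum_j Q^j A_r(j), part_law1 gives
   N_(r-1) = Q N_r and expresses (Q - 1) P_r through beta_r and beta_(r-1);
   substituting both into part_law2 summed against Q^-j leaves the three-term
   recursion.  Uniqueness holds because Q^n - 1 <> 0 for n >= 1. *)

Lemma compositions_auxS f n : compositions_aux f.+1 n.+1 =
  flatten [seq [seq k :: c | c <- compositions_aux f (n.+1 - k)] | k <- iota 1 n.+1].
Proof. by []. Qed.

Lemma compositions_aux_fuel n f1 f2 : (n <= f1)%N -> (n <= f2)%N ->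
  compositions_aux f1 n = compositions_aux f2 n.
Proof.
elim: n {-2}n (leqnn n) f1 f2 => [|N IH] n hN f1 f2 h1 h2.
  by move: hN; rewrite leqn0 => /eqP ->; case: f1 {h1}; case: f2 {h2}.
case: n hN h1 h2 => [|n] hN h1 h2; first by case: f1 {h1}; case: f2 {h2}.
case: f1 h1 => [//|f1] h1; case: f2 h2 => [//|f2] h2; rewrite !compositions_auxS.
congr flatten; apply/eq_in_map => k; rewrite mem_iota => /andP [hk1 hk2].
congr map; apply: IH; lia.
Qed.

Lemma compositionsS n : compositions n.+1 =
  flatten [seq [seq k :: c | c <- compositions (n.+1 - k)] | k <- iota 1 n.+1].
Proof.
rewrite /compositions compositions_auxS; congr flatten; apply/eq_in_map => k.
by rewrite mem_iota => /andP [hk1 hk2]; congr map; apply: compositions_aux_fuel; lia.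
Qed.

Lemma big_compositionsS (V : nmodType) n (F : seq nat -> V) :
  \sum_(c <- compositions n.+1) F c =
  \sum_(1 <= k < n.+2) \sum_(c <- compositions (n.+1 - k)) F (k :: c).
Proof.
rewrite compositionsS big_flatten big_map /index_iota subn1.
by apply: eq_bigr => k _; rewrite big_map.
Qed.

Lemma sumr_nat_trunc (V : nmodType) (F : nat -> V) n M : (n <= M)%N ->
  (forall j, (n <= j)%N -> F j = 0) -> \sum_(0 <= j < M) F j = \sum_(0 <= j < n) F j.
Proof.
move=> hnM hF; rewrite (big_cat_nat (leq0n n) hnM) /= [X in _ + X]big1_seq ?addr0 //.
by move=> j /andP [_]; rewrite mem_index_iota => /andP [hj _]; apply: hF.
Qed.

Lemma sumr_nat_pred (R : pzSemiRingType) (f h : nat -> R) M : f 0%N = 0 ->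
  \sum_(0 <= j < M.+1) f j.-1 * h j = \sum_(0 <= j < M) f j * h j.+1.
Proof. by move=> f0; rewrite big_nat_recl //= f0 mul0r add0r. Qed.

Section BetaStar.
Variables (R : realFieldType) (Q a : R).
Hypothesis Q_gt1 : 1 < Q.

Local Notation v := (v_star Q a).
Local Notation beta := (beta_star Q a).

Definition comp_weight (c : seq nat) : R := (\prod_(k <- c) v k) /
  \prod_(i < (size c).-1) (1 - Q ^+ (nth 0%N c i + nth 0%N c i.+1)).

Definition link_factor (k : nat) (c : seq nat) : R :=
  if c is h :: _ then (1 - Q ^+ (k + h))^-1 else 1.

(* [beta_part r j = v j * gamma (r - j) j] is the part of [beta r] coming from
   the compositions of [r] with first part [j]. *)
Definition gamma (r k : nat) : R :=
  \sum_(c <- compositions r) comp_weight c * link_factor k c.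

Definition beta_part (r j : nat) : R :=
  if (0 < j <= r)%N then v j * gamma (r - j) j else 0.

Definition moment (r : nat) (w : nat -> R) : R :=
  \sum_(0 <= j < r.+1) beta_part r j * w j.

Lemma comp_weight_cons h c : comp_weight (h :: c) = v h * comp_weight c * link_factor h c.
Proof.
rewrite /comp_weight big_cons /=; case: c => [|h' c] /=.
  by rewrite !big_ord0 big_nil !invr1 !mulr1.
rewrite big_ord_recl /= invfM; ring.
Qed.

Lemma beta_starE n : beta n = \sum_(c <- compositions n) comp_weight c.
Proof. by []. Qed.

Lemma beta_star0 : beta 0 = 1.
Proof. by rewrite beta_starE big_seq1 /comp_weight big_nil big_ord0 divr1. Qed.

Lemma gamma0 k : gamma 0 k = 1.
Proof. by rewrite /gamma big_seq1 /comp_weight big_nil big_ord0 divr1 mulr1. Qed.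

Lemma gammaS r k : gamma r.+1 k =
  \sum_(1 <= h < r.+2) v h * gamma (r.+1 - h) h * (1 - Q ^+ (k + h))^-1.
Proof.
rewrite /gamma big_compositionsS; apply: eq_bigr => h _.
rewrite big_distrr big_distrl /=; apply: eq_bigr => c _.
rewrite comp_weight_cons /=; ring.
Qed.

Lemma beta_starS r : beta r.+1 = \sum_(1 <= h < r.+2) v h * gamma (r.+1 - h) h.
Proof.
rewrite beta_starE big_compositionsS; apply: eq_bigr => h _.
by rewrite /gamma big_distrr /=; apply: eq_bigr => c _; rewrite comp_weight_cons mulrA.
Qed.

Lemma Q_gt0 : 0 < Q. Proof. exact: lt_trans Q_gt1. Qed.

Lemma expQ_neq0 n : Q ^+ n != 0.
Proof. by rewrite gt_eqF ?exprn_gt0 ?Q_gt0. Qed.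

Lemma expQ_gt1 n : (0 < n)%N -> 1 < Q ^+ n.
Proof. by move=> hn; rewrite exprn_egt1 // -lt0n. Qed.

Lemma expQB1_neq0 n : (0 < n)%N -> Q ^+ n - 1 != 0.
Proof. by move=> hn; rewrite subr_eq0 gt_eqF ?expQ_gt1. Qed.

Lemma subr1_expQ_neq0 n : (0 < n)%N -> 1 - Q ^+ n != 0.
Proof. by move=> hn; rewrite subr_eq0 lt_eqF ?expQ_gt1. Qed.

Lemma expQBQ_neq0 n : (1 < n)%N -> Q ^+ n - Q != 0.
Proof. by move=> hn; rewrite subr_eq0 gt_eqF // -{1}(expr1 Q) ltr_eXn2l. Qed.

Lemma v_starS j : v j.+1 = v j * zeta_star Q a j.+1.
Proof. by rewrite /v_star big_nat_recr. Qed.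

Lemma v_star1 : v 1 = (Q + 1 - a) / (Q - 1).
Proof. by rewrite v_starS /v_star big_geq // mul1r /zeta_star eqxx. Qed.

Lemma beta_star1 : beta 1 = (Q + 1 - a) / (Q - 1).
Proof. by rewrite beta_starS big_nat1 gamma0 mulr1 v_star1. Qed.

Lemma zeta_starE j : (1 < j)%N -> zeta_star Q a j =
  (Q ^+ j * Q ^+ j - a * Q ^+ j + Q) / ((Q ^+ j - 1) * (Q ^+ j - Q)).
Proof.
move=> hj; rewrite /zeta_star ifN ?neq_ltn ?hj ?orbT //.
have := expQ_neq0 j; have := @expQB1_neq0 j (ltnW hj); have := @expQBQ_neq0 j hj.
set X := Q ^+ j => h2 h1 h0; field; by rewrite h0 h1 h2.
Qed.

Lemma beta_part0 r : beta_part r 0 = 0. Proof. by []. Qed.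

Lemma beta_part_gt r j : (r < j)%N -> beta_part r j = 0.
Proof. by move=> h; rewrite /beta_part (leqNgt j r) h andbF. Qed.

Lemma beta_partE r j : (0 < j)%N -> (j <= r)%N -> beta_part r j = v j * gamma (r - j) j.
Proof. by move=> h1 h2; rewrite /beta_part h1 h2. Qed.

Lemma momentE r w : moment r w = \sum_(1 <= h < r.+1) v h * gamma (r - h) h * w h.
Proof.
rewrite /moment big_nat_recl // beta_part0 mul0r add0r big_add1 /=.
by apply: eq_big_nat => j /andP [h1 h2]; rewrite beta_partE.
Qed.

Lemma moment_widen r w M : (r < M)%N -> \sum_(0 <= j < M) beta_part r j * w j = moment r w.
Proof.
by move=> hM; rewrite (@sumr_nat_trunc _ _ r.+1 M) // => j hj; rewrite beta_part_gt ?mul0r.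
Qed.

Lemma moment_pred r w M : (r.+1 < M)%N ->
  \sum_(0 <= j < M) beta_part r j.-1 * w j = moment r (fun j => w j.+1).
Proof. by case: M => // M hM; rewrite sumr_nat_pred // moment_widen. Qed.

Lemma eq_moment r w1 w2 : w1 =1 w2 -> moment r w1 = moment r w2.
Proof. by move=> ew; apply: eq_bigr => j _; rewrite ew. Qed.

Lemma beta_moment r : (0 < r)%N -> beta r = moment r (fun=> 1).
Proof.
case: r => // r _; rewrite momentE beta_starS.
by apply: eq_bigr => j _; rewrite mulr1.
Qed.

Lemma gamma_moment r k : (0 < r)%N ->
  gamma r k = moment r (fun j => (1 - Q ^+ (k + j))^-1).
Proof. by case: r => // r _; rewrite momentE gammaS. Qed.

Lemma moment_lin r c0 c1 c2 : (0 < r)%N ->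
  moment r (fun j => c0 + c1 * Q ^+ j + c2 * (Q ^+ j)^-1) =
  c0 * beta r + c1 * moment r (fun j => Q ^+ j) + c2 * moment r (fun j => (Q ^+ j)^-1).
Proof.
move=> hr; rewrite beta_moment // /moment !mulr_sumr -!big_split /=.
by apply: eq_bigr => j _; ring.
Qed.

Lemma gamma_widen r k M : (0 < r)%N -> (r < M)%N ->
  gamma r k = \sum_(0 <= j < M) beta_part r j * (1 - Q ^+ (k + j))^-1.
Proof. by move=> hr hM; rewrite gamma_moment // moment_widen. Qed.

Lemma gamma_widenS r k M : (0 < r)%N -> (r.+1 < M)%N ->
  gamma r k.+1 = \sum_(0 <= j < M) beta_part r j.-1 * (1 - Q ^+ (k + j))^-1.
Proof.
move=> hr hM; rewrite gamma_moment // moment_pred //.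
by apply: eq_moment => j; rewrite addnS addSn.
Qed.

Definition gamma_shift_law r := forall m,
  (Q ^+ m.+1 - 1) * gamma r m =
    (Q ^+ (r + m.+1) - 1) * gamma r m.+1 - Q ^+ m * (Q ^+ r - Q) * gamma r.-1 m.+1.

Definition gamma_step_law s := forall m,
  (Q ^+ s.+1 - 1) * Q ^+ m * gamma s.+1 m =
    (1 - a * Q ^+ m + Q * (Q ^+ m * Q ^+ m)) / (1 - Q * Q ^+ m) * gamma s m.+1
    + (Q ^+ (s + m) - 1) * gamma s m.

Definition part_law1 r j :=
  (Q - Q ^+ j) * beta_part r j + (Q ^+ j - Q ^+ r.+1) * beta_part r j.-1
  + (Q ^+ r - Q) * beta_part r.-1 j.-1 = 0.

Definition part_law2 n j :=
  (Q ^+ j - Q) * (1 - Q ^+ n) * beta_part n j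
  + (Q ^+ j - Q) * (Q ^+ n.-1 - Q ^+ j) * beta_part n.-1 j
  + (Q - a * Q ^+ j + Q ^+ j * Q ^+ j) * beta_part n.-1 j.-1 = 0.

Lemma part_law1_of_step t i : (0 < i)%N -> gamma_step_law t -> part_law1 (t + i.+1) i.+1.
Proof.
move=> hi HT; have H := HT i; rewrite /part_law1 /=.
rewrite (beta_partE (t + i.+1) i.+1) // ?addnK; last by lia.
rewrite (beta_partE (t + i.+1) i) //; last by lia.
rewrite (beta_partE (t + i.+1).-1 i) //; last by lia.
have -> : (t + i.+1 - i = t.+1)%N by lia.
have -> : ((t + i.+1).-1 - i = t)%N by lia.
rewrite v_starS zeta_starE //.
have e1 : Q ^+ i.+1 = Q * Q ^+ i by rewrite exprS.
have e2 : Q ^+ (t + i.+1).+1 = Q * Q * Q ^+ t * Q ^+ i.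
  by rewrite (_ : ((t + i.+1).+1 = 2 + t + i)%N) ?expr2 ?exprD; [ring | lia].
have e3 : Q ^+ (t + i.+1) = Q * Q ^+ t * Q ^+ i.
  by rewrite (_ : ((t + i.+1) = 1 + t + i)%N) ?expr1 ?exprD; [ring | lia].
have e4 : Q ^+ t.+1 = Q * Q ^+ t by rewrite exprS.
have e5 : Q ^+ (t + i) = Q ^+ t * Q ^+ i by rewrite exprD.
move: H; rewrite e1 e2 e3 e4 e5.
have n1 := expQ_neq0 i; have n2 := expQB1_neq0 i.+1 isT; have n3 := expQBQ_neq0 i.+1 hi.
have n4 := subr1_expQ_neq0 i.+1 isT; have n5 := expQB1_neq0 t.+1 isT.
rewrite e1 e4 in n2 n3 n4 n5.
move: n1 n2 n3 n4 n5.
set X := Q ^+ i; set Z := Q ^+ t.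
set G1 := gamma t i.+1; set G2 := gamma t.+1 i; set G3 := gamma t i.
move=> n1 n2 n3 n4 n5 H.
have -> : G2 = ((1 - a * X + Q * (X * X)) / (1 - Q * X) * G1 + (Z * X - 1) * G3)
               / ((Q * Z - 1) * X).
  rewrite -H; field; by rewrite n1 n5.
field; by rewrite ?n1 ?n2 ?n3 ?n4 ?n5.
Qed.

Lemma part_law2_of_shift t i : (0 < i)%N -> (0 < t)%N -> gamma_shift_law t ->
  part_law2 (t + i.+1) i.+1.
Proof.
move=> hi ht HS; have H := HS i; rewrite /part_law2 /=.
rewrite (beta_partE (t + i.+1) i.+1) // ?addnK; last by lia.
rewrite (beta_partE (t + i.+1).-1 i.+1) //; last by lia.
rewrite (beta_partE (t + i.+1).-1 i) //; last by lia.
have -> : ((t + i.+1).-1 - i.+1 = t.-1)%N by lia.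
have -> : ((t + i.+1).-1 - i = t)%N by lia.
rewrite v_starS zeta_starE //.
have e1 : Q ^+ i.+1 = Q * Q ^+ i by rewrite exprS.
have e3 : Q ^+ (t + i.+1) = Q * Q ^+ t * Q ^+ i.
  by rewrite (_ : ((t + i.+1) = 1 + t + i)%N) ?expr1 ?exprD; [ring | lia].
have e5 : Q ^+ (t + i.+1).-1 = Q ^+ t * Q ^+ i.
  by rewrite (_ : ((t + i.+1).-1 = t + i)%N) ?exprD; [ring | lia].
move: H; rewrite e1 e3 e5.
have n1 := expQ_neq0 i; have n2 := expQB1_neq0 i.+1 isT; have n3 := expQBQ_neq0 i.+1 hi.
rewrite e1 in n2 n3.
move: n1 n2 n3.
set X := Q ^+ i; set Z := Q ^+ t.
set G1 := gamma t i.+1; set G4 := gamma t.-1 i.+1; set G3 := gamma t i.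
move=> n1 n2 n3 H.
have -> : G3 = ((Q * Z * X - 1) * G1 - X * (Z - Q) * G4) / (Q * X - 1).
  apply: (mulfI n2); rewrite H; field; by rewrite n2.
field; by rewrite ?n1 ?n2 ?n3.
Qed.

Lemma part_law2_diag i : (0 < i)%N -> part_law2 i.+1 i.+1.
Proof.
move=> hi; rewrite /part_law2 /= (beta_part_gt i i.+1) // mulr0 addr0.
rewrite (beta_partE i.+1 i.+1) // (beta_partE i i) // !subnn !gamma0 !mulr1 v_starS zeta_starE //.
have e1 : Q ^+ i.+1 = Q * Q ^+ i by rewrite exprS.
have n2 := expQB1_neq0 i.+1 isT; have n3 := expQBQ_neq0 i.+1 hi.
rewrite e1 in n2 n3 *; move: n2 n3; set X := Q ^+ i => n2 n3.
field; by rewrite n2 n3.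
Qed.

Lemma part_law2_of_shifts s : (forall t, (0 < t)%N -> (t < s)%N -> gamma_shift_law t) ->
  forall j, part_law2 s.+1 j.
Proof.
move=> IH j; case: j => [|j].
  by rewrite /part_law2 /= !beta_part0 !mulr0 !addr0.
case: j => [|i].
  by rewrite /part_law2 /= !beta_part0 !subrr !mul0r !mulr0 !addr0.
case: (ltngtP i.+2 s.+1) => hc.
- have -> : s.+1 = ((s.+1 - i.+2) + i.+2)%N by lia.
  apply: part_law2_of_shift => //; first by lia.
  by apply: IH; lia.
- by rewrite /part_law2 /= !beta_part_gt ?mulr0 ?addr0 //; lia.
- rewrite -hc; exact: part_law2_diag.
Qed.

Lemma part_law1_of_steps r : (0 < r)%N -> (forall t, (t <= r - 2)%N -> gamma_step_law t) ->
  forall j, part_law1 r j.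
Proof.
move=> hr IH j; case: j => [|j].
  by rewrite /part_law1 /= !beta_part0 !mulr0 !addr0.
case: j => [|i].
  by rewrite /part_law1 /= !beta_part0 expr1 subrr !mul0r !mulr0 !addr0.
case: (ltnP r i.+2) => hc.
- case: (ltngtP r.+1 i.+2) => hc2.
  + rewrite /part_law1 /= !beta_part_gt ?mulr0 ?addr0 //; lia.
  + lia.
  + rewrite /part_law1 /= -hc2 subrr mul0r !beta_part_gt ?mulr0 ?addr0 //; lia.
- have -> : r = ((r - i.+2) + i.+2)%N by lia.
  apply: part_law1_of_step => //.
  by apply: IH; lia.
Qed.

(* The [j]-th increment of the telescoping sum in [gamma_shift_law_of_part_law1];
   the hypothesis is [part_law1 r j] with [x = Q^j], [Y = Q^r]. *)
Lemma gamma_shift_law_term (u x Y Am Ap C : R) : 1 - u * x != 0 ->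
  (Q - x) * Am + (x - Q * Y) * Ap + (Y - Q) * C = 0 ->
  (Q * u - 1) * (Am * (1 - u * x)^-1) - ((Q * Y * u - 1) * (Ap * (1 - u * x)^-1)
    - u * (Y - Q) * (C * (1 - u * x)^-1)) = Ap - Am.
Proof.
move=> nz H.
have -> : (Q * u - 1) * (Am * (1 - u * x)^-1) - ((Q * Y * u - 1) * (Ap * (1 - u * x)^-1)
    - u * (Y - Q) * (C * (1 - u * x)^-1)) =
    Ap - Am + u * (1 - u * x)^-1 * ((Q - x) * Am + (x - Q * Y) * Ap + (Y - Q) * C).
  by field; rewrite nz.
by rewrite H mulr0 addr0.
Qed.

Lemma gamma_shift_law_of_part_law1 r : (1 < r)%N -> (forall j, part_law1 r j) ->
  gamma_shift_law r.
Proof.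
move=> hr HP m.
have hr0 : (0 < r)%N := ltnW hr.
rewrite (gamma_widen r m r.+2) // (gamma_widenS r m r.+2) // (gamma_widenS r.-1 m r.+2); try lia.
apply/eqP; rewrite -subr_eq0; apply/eqP.
rewrite !mulr_sumr -!sumrB.
rewrite (telescope_sumr_eq (fun j => - beta_part r j.-1)) //; last first.
  move=> j _ /=; case: j => [|j]; first by rewrite !beta_part0; ring.
  have hx : 1 - Q ^+ m * Q ^+ j.+1 != 0 by rewrite -exprD subr1_expQ_neq0 // addnS.
  have em : Q ^+ m.+1 = Q * Q ^+ m by rewrite exprS.
  have er : Q ^+ (r + m.+1) = Q * Q ^+ r * Q ^+ m.
    by rewrite (_ : (r + m.+1 = 1 + r + m)%N) ?exprD ?expr1; [ring | lia].
  rewrite exprD em er gamma_shift_law_term //; first by rewrite /=; ring.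
  by have := HP j.+1; rewrite /part_law1 [Q ^+ r.+1]exprS.
by rewrite /= beta_part_gt // beta_part0 oppr0 subr0.
Qed.

(* The [j]-th increment of the telescoping sum in [gamma_step_law_of_part_law2];
   the hypothesis is [part_law2 s.+1 (j+2)] with [z = Q^(j+1)], [Ys = Q^s]. *)
Lemma gamma_step_law_term (u z Ys Ap1 As As1 : R) : z != 0 -> 1 - z != 0 -> 1 - u * (Q * z) != 0 ->
  1 - Q * u != 0 ->
  (Q * z - Q) * (1 - Q * Ys) * Ap1 + (Q * z - Q) * (Ys - Q * z) * As
    + (Q - a * (Q * z) + (Q * z) * (Q * z)) * As1 = 0 ->
  (Q * Ys - 1) * u * (Ap1 * (1 - u * (Q * z))^-1)
    - ((1 - a * u + Q * (u * u)) / (1 - Q * u) * (As1 * (1 - u * (Q * z))^-1)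
       + (Ys * u - 1) * (As * (1 - u * (Q * z))^-1))
  = As - As1 - (Q + 1 - a) * u * (1 - Q * u)^-1 * (As1 * (1 - z)^-1).
Proof.
move=> n1 n2 n3 n4 H.
have nQ : Q != 0 by rewrite gt_eqF ?Q_gt0.
set L := (Q * Ys - 1) * u * _ - _.
have -> : L = As - As1 - (Q + 1 - a) * u * (1 - Q * u)^-1 * (As1 * (1 - z)^-1)
   - u * (1 - u * (Q * z))^-1 / (Q * z - Q) *
   ((Q * z - Q) * (1 - Q * Ys) * Ap1 + (Q * z - Q) * (Ys - Q * z) * As
    + (Q - a * (Q * z) + (Q * z) * (Q * z)) * As1).
  have n6 : Q * z - Q != 0 by rewrite -{2}(mulr1 Q) -mulrBr mulf_neq0 // -oppr_eq0 opprB.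
  by rewrite /L; field; rewrite n6 n3 n2 n4.
by rewrite H mulr0 subr0.
Qed.

Lemma gamma_step_law_of_part_law2 s : (0 < s)%N -> (forall j, part_law2 s.+1 j) ->
  gamma_shift_law s -> gamma_step_law s.
Proof.
move=> hs HV HS m.
have HS0 := HS 0%N.
rewrite (gamma_widen s.+1 m s.+2) // (gamma_widenS s m s.+2) // (gamma_widen s m s.+2) //.
apply/eqP; rewrite -subr_eq0; apply/eqP.
rewrite !mulr_sumr -big_split -sumrB /=.
rewrite big_nat_recl // big_nat_recl //= !beta_part0.
rewrite !(mul0r, mulr0, add0r, addr0, subr0, sub0r, oppr0).
set u := Q ^+ m.
have n4 : 1 - Q * u != 0 by rewrite /u -exprS subr1_expQ_neq0.
have eA : Q ^+ (s + m) = Q ^+ s * u by rewrite exprD.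
have eB : Q ^+ s.+1 = Q * Q ^+ s by rewrite exprS.
have eC i : Q ^+ (m + i.+2) = u * (Q * Q ^+ i.+1) by rewrite exprD [Q ^+ i.+2]exprS.
rewrite eA eB.
under eq_bigr => i _.
  rewrite eC.
  rewrite gamma_step_law_term; first last.
  - by have := HV i.+2; rewrite /part_law2 /= !exprS.
  - exact: n4.
  - by rewrite -exprS -exprD subr1_expQ_neq0 // addnS.
  - exact: subr1_expQ_neq0.
  - exact: expQ_neq0.
  over.
rewrite sumrB (telescope_sumr (fun i => beta_part s i.+1)) // (beta_part_gt s s.+1) // -mulr_sumr.
have Hg0 : gamma s 0 = \sum_(0 <= i < s) beta_part s i.+1 * (1 - Q ^+ i.+1)^-1.
  by rewrite (gamma_widen s 0 s.+1) // big_nat_recl // beta_part0 mul0r add0r.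
(* The boundary term [gamma s 0] is eliminated by the shift law at [m = 0]. *)
rewrite -Hg0 (beta_partE s.+1 1) // (beta_partE s 1) // !subn1 /= v_star1 addn1 exprS -/u.
move: HS0; rewrite expr1 expr0 mul1r addn1 exprS.
have nQ1 : Q - 1 != 0 by rewrite subr_eq0 gt_eqF.
set G0 := gamma s 0; set G1 := gamma s 1; set Gm := gamma s.-1 1; set Qs := Q ^+ s => HS0.
have -> : G0 = ((Q * Qs - 1) * G1 - (Qs - Q) * Gm) / (Q - 1).
  by rewrite -HS0; field; rewrite nQ1.
field; by rewrite nQ1 n4.
Qed.

Lemma gamma_shift_law1 : gamma_shift_law 1.
Proof.
move=> m; rewrite /gamma_shift_law /= subrr mulr0 mul0r subr0.
rewrite !(gamma_widen 1 _ 2) // !big_nat_recl // !big_geq // beta_part0 !mul0r !add0r !addr0.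
rewrite (beta_partE 1 1) // subnn gamma0 mulr1.
have n1 := subr1_expQ_neq0 m.+1 isT; have n2 := subr1_expQ_neq0 m.+2 isT.
rewrite !addn1 (_ : (1 + m.+1)%N = m.+2) //.
field; by rewrite n1 n2.
Qed.

Lemma gamma_step_law0 : gamma_step_law 0.
Proof.
move=> m; rewrite /gamma_step_law !gamma0 !mulr1 add0n expr1.
rewrite (gamma_widen 1 _ 2) // !big_nat_recl // !big_geq // beta_part0 !mul0r !add0r !addr0.
rewrite (beta_partE 1 1) // subnn gamma0 mulr1 v_star1 addn1 exprS.
have n1 : 1 - Q * Q ^+ m != 0 by rewrite -exprS subr1_expQ_neq0.
have nQ1 : Q - 1 != 0 by rewrite subr_eq0 gt_eqF.
move: n1; set u := Q ^+ m => n1.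
field; by rewrite n1 nQ1.
Qed.

Lemma gamma_laws r : ((0 < r)%N -> gamma_shift_law r) /\ gamma_step_law r.
Proof.
elim/ltn_ind: r => r IH.
have shift_r : (0 < r)%N -> gamma_shift_law r.
  case: (ltngtP r 1) => [|hr _|-> _]; [by case: r {IH} | | exact: gamma_shift_law1].
  apply: gamma_shift_law_of_part_law1 => //; apply: part_law1_of_steps; first exact: ltnW.
  by move=> t ht; apply: (IH t _).2; lia.
split=> //; case: r IH shift_r => [|s] IH shift_s; first exact: gamma_step_law0.
apply: gamma_step_law_of_part_law2; first by lia.
- by apply: part_law2_of_shifts => t ht1 ht2; apply: (IH t _).1.
- by apply: shift_s; lia.
Qed.

Lemma part_law1_holds r : (0 < r)%N -> forall j, part_law1 r j.
Proof. by move=> hr; apply: part_law1_of_steps => // t _; exact: (gamma_laws t).2. Qed.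

Lemma part_law2_holds n j : part_law2 n j.
Proof.
case: n => [|s]; first by rewrite /part_law2 /beta_part; case: j => [|[|j]] /=; ring.
by apply: part_law2_of_shifts => t ht _; exact: (gamma_laws t).1.
Qed.

Lemma moment_law1 r w : (forall j, part_law1 r j) ->
  moment r (fun j => w j * (Q - Q ^+ j) + w j.+1 * (Q ^+ j.+1 - Q ^+ r.+1))
  + (Q ^+ r - Q) * moment r.-1 (fun j => w j.+1) = 0.
Proof.
move=> law.
have : \sum_(0 <= j < r.+2) (beta_part r j * (w j * (Q - Q ^+ j))
    + beta_part r j.-1 * (w j * (Q ^+ j - Q ^+ r.+1))
    + (Q ^+ r - Q) * (beta_part r.-1 j.-1 * w j)) = 0.
  apply: big1 => j _; rewrite -(mulr0 (w j)) -(law j); ring.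
rewrite !big_split /= -mulr_sumr moment_widen // !moment_pred; try lia.
by move=> <-; rewrite -big_split; congr (_ + _); apply: eq_bigr => j _; rewrite mulrDr.
Qed.

Lemma moment_law2 n w : (forall j, part_law2 n j) ->
  (1 - Q ^+ n) * moment n (fun j => w j * (Q ^+ j - Q))
  + moment n.-1 (fun j => w j * (Q ^+ j - Q) * (Q ^+ n.-1 - Q ^+ j)
                        + w j.+1 * (Q - a * Q ^+ j.+1 + Q ^+ j.+1 * Q ^+ j.+1)) = 0.
Proof.
move=> law.
have : \sum_(0 <= j < n.+2) ((1 - Q ^+ n) * (beta_part n j * (w j * (Q ^+ j - Q)))
    + beta_part n.-1 j * (w j * (Q ^+ j - Q) * (Q ^+ n.-1 - Q ^+ j))
    + beta_part n.-1 j.-1 * (w j * (Q - a * Q ^+ j + Q ^+ j * Q ^+ j))) = 0.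
  apply: big1 => j _; rewrite -(mulr0 (w j)) -(law j); ring.
rewrite !big_split /= -mulr_sumr !moment_widen ?moment_pred; try lia.
by move=> <-; rewrite -addrA -big_split; congr (_ + _); apply: eq_bigr => j _; rewrite mulrDr.
Qed.

Local Notation inv_moment r := (moment r (fun j => (Q ^+ j)^-1)).
Local Notation pow_moment r := (moment r (fun j => Q ^+ j)).

Lemma inv_moment_pred r : (1 < r)%N -> inv_moment r.-1 = Q * inv_moment r.
Proof.
move=> hr; have := moment_law1 r (fun j => (Q ^+ j)^-1) (part_law1_holds r (ltnW hr)).
have nQ := expQ_neq0 1; rewrite expr1 in nQ.
rewrite (@eq_moment r _ (fun j => 0 + 0 * Q ^+ j + (Q - Q ^+ r) * (Q ^+ j)^-1)); last first.
  move=> j; rewrite !exprS; have := expQ_neq0 j; set X := Q ^+ j => nX.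
  by field; rewrite nX nQ.
rewrite (@eq_moment r.-1 _ (fun j => 0 + 0 * Q ^+ j + Q^-1 * (Q ^+ j)^-1)); last first.
  by move=> j; rewrite exprS invfM; ring.
rewrite !moment_lin; [|lia..].
move=> law; apply: (mulfI (mulf_neq0 (expQBQ_neq0 r hr) (invr_neq0 nQ))).
by apply/eqP; rewrite -subr_eq0 -law; apply/eqP; field.
Qed.

Lemma pow_momentE r : (0 < r)%N ->
  (Q - 1) * pow_moment r = Q * (Q ^+ r - 1) * beta r - (Q ^+ r - Q) * beta r.-1.
Proof.
move=> hr; have := moment_law1 r (fun=> 1) (part_law1_holds r hr).
rewrite (@eq_moment r _ (fun j => (Q - Q ^+ r.+1) + (Q - 1) * Q ^+ j + 0 * (Q ^+ j)^-1));
  last by move=> j; rewrite exprS; ring.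
rewrite moment_lin // mul0r addr0 => law.
have -> : (Q ^+ r - Q) * beta r.-1 = (Q ^+ r - Q) * moment r.-1 (fun=> 1).
  case: r hr {law} => [|[|r]] // _; first by rewrite expr1 subrr !mul0r.
  by rewrite beta_moment.
apply/eqP; rewrite -subr_eq0 -law exprS; apply/eqP; ring.
Qed.

Lemma beta_star_rec n : (1 < n)%N ->
  (Q ^+ n - 1) * beta n = (Q ^+ n + Q ^+ n.-1 - a) * beta n.-1 - (Q ^+ n.-1 - Q) * beta n.-2.
Proof.
move=> hn; have := moment_law2 n (fun j => (Q ^+ j)^-1) (part_law2_holds n).
have nQ := expQ_neq0 1; rewrite expr1 in nQ.
have eQn : Q ^+ n = Q * Q ^+ n.-1 by rewrite -exprS prednK // ltnW.
rewrite (@eq_moment n _ (fun j => 1 + 0 * Q ^+ j + (- Q) * (Q ^+ j)^-1)); last first.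
  by move=> j; have := expQ_neq0 j; set X := Q ^+ j => nX; field.
rewrite (@eq_moment n.-1 _ (fun j => (Q ^+ n.-1 + Q - a) + (Q - 1) * Q ^+ j
                                 + (1 - Q ^+ n) * (Q ^+ j)^-1)); last first.
  move=> j; rewrite eQn exprS.
  by have := expQ_neq0 j; set X := Q ^+ j => nX; field; rewrite nX nQ.
rewrite !moment_lin; [|lia..].
rewrite inv_moment_pred // pow_momentE; last by lia.
by rewrite eQn => law; apply/eqP; rewrite -subr_eq0 -oppr_eq0 -law; apply/eqP; ring.
Qed.

End BetaStar.

Section Ext0.
Variable R : realFieldType.

Lemma ext0_subS1 (f : nat -> R) n : ext0 f (n.+1%:Z - 1) = f n.
Proof. by rewrite (_ : n.+1%:Z - 1 = n) //; lia. Qed.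

Lemma ext0_subSS2 (f : nat -> R) n : ext0 f (n.+2%:Z - 2) = f n.
Proof. by rewrite (_ : n.+2%:Z - 2 = n) //; lia. Qed.

Lemma ext0_1_sub2 (f : nat -> R) : ext0 f (1%:Z - 2) = 0.
Proof. by []. Qed.

Lemma ext0_rec_eq (c d e b b' : nat -> R) :
  (forall n, (0 < n)%N -> c n != 0) -> b 0%N = b' 0%N ->
  (forall n, (0 < n)%N -> c n * b n = d n * ext0 b (n%:Z - 1) - e n * ext0 b (n%:Z - 2)) ->
  (forall n, (0 < n)%N -> c n * b' n = d n * ext0 b' (n%:Z - 1) - e n * ext0 b' (n%:Z - 2)) ->
  b =1 b'.
Proof.
move=> c_neq0 eq0 rec rec' n; elim/ltn_ind: n => -[|n] IH //.
apply: (mulfI (c_neq0 _ (ltn0Sn n))); rewrite rec // rec' //; case: n IH => [|k] IH.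
- by rewrite !ext0_subS1 !ext0_1_sub2 eq0.
- by rewrite !ext0_subSS2 !ext0_subS1 !IH.
Qed.

End Ext0.

Theorem theorem4p4 (R : realFieldType) (Q a : R) (hQ : 1 < Q) :
  (forall n : nat, (1 <= n)%N ->
     (Q ^+ n - 1) * beta_star Q a n =
       (Q ^+ n + Q ^+ n.-1 - a) * ext0 (beta_star Q a) (n%:Z - 1)
       - (Q ^+ n.-1 - Q) * ext0 (beta_star Q a) (n%:Z - 2)) /\
  (forall b : nat -> R, b 0%N = 1 ->
     (forall n : nat, (1 <= n)%N ->
        (Q ^+ n - 1) * b n =
          (Q ^+ n + Q ^+ n.-1 - a) * ext0 b (n%:Z - 1)
          - (Q ^+ n.-1 - Q) * ext0 b (n%:Z - 2)) ->
     forall n : nat, b n = beta_star Q a n).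
Proof.
have beta_rec (n : nat) : (1 <= n)%N ->
    (Q ^+ n - 1) * beta_star Q a n =
      (Q ^+ n + Q ^+ n.-1 - a) * ext0 (beta_star Q a) (n%:Z - 1)
      - (Q ^+ n.-1 - Q) * ext0 (beta_star Q a) (n%:Z - 2).
  case: n => [|[|k]] // _; last by rewrite ext0_subSS2 ext0_subS1 beta_star_rec.
  have nQ1 : Q - 1 != 0 by rewrite subr_eq0 gt_eqF.
  rewrite ext0_subS1 ext0_1_sub2 beta_star0 beta_star1 expr1 expr0.
  by field.
split=> // b b0 rec_b.
apply: (@ext0_rec_eq _ (fun n => Q ^+ n - 1) (fun n => Q ^+ n + Q ^+ n.-1 - a)
  (fun n => Q ^+ n.-1 - Q)) rec_b beta_rec; last by rewrite b0 beta_star0.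
by move=> n; apply: expQB1_neq0.
Qed.
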